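(* Let $\theta\in(0,\pi)$ with $\cos\theta=s/r$, where $r,s\in\mathbb{Z}$, $0\le|s|<r$, $\gcd(r,s)=1$, and let $m$ be a positive rational number. A natural number $n$ belongs to $\mathcal{N}_{\theta,m}$ if and only if the system $$E_\theta^{(m,n)}:\ y^2=x\left(x+\frac{2n(r+s)}{m+1}\right)\left(x-\frac{2n(r-s)}{m+1}\right),\qquad G_\theta^{(m,n)}:\ z^2=x^4+b_1x^3+b_2x^2+b_3x+b_4,$$ has a rational solution $(x,y,z)$ with $y\ne0$, where $$b_1=8ns,\quad b_2=\frac{8n^2(2m^2r^2+4s^2m+3s^2-r^2)}{(m+1)^2},\quad b_3=-\frac{32n^3s(r^2-s^2)}{(m+1)^2},\quad b_4=\frac{16n^4(r^2-s^2)^2}{(m+1)^4}.$$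
   Context: $\mathcal{N}_{\theta,m}$ is the set of natural numbers $n$ for which there exist positive rationals $a,b,c,d,e$ with $a^2+b^2-\frac{2s}{r}ab=c^2$, $a^2+d^2+\frac{2s}{r}ad=e^2$, $a(b+d)=rn$, and $d=mb$ (a $\theta$-parallelogram envelope with ratio $m$ for $n$). *)

From mathcomp Require Import all_boot all_order all_algebra.
Set Implicit Arguments. Unset Strict Implicit. Unset Printing Implicit Defensive.
Import Order.TTheory GRing.Theory Num.Theory.
Local Open Scope ring_scope.

Definition in_N_theta_m (r s : int) (m : rat) (n : nat) : Prop :=
  exists a b c d e : rat,
    [/\ 0 < a, 0 < b, 0 < c, 0 < d & 0 < e] /\
    [/\ a ^+ 2 + b ^+ 2 - 2%:R * (s%:~R / r%:~R) * a * b = c ^+ 2,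
        a ^+ 2 + d ^+ 2 + 2%:R * (s%:~R / r%:~R) * a * d = e ^+ 2,
        a * (b + d) = r%:~R * n%:R
      & d = m * b].

From mathcomp Require Import all_boot all_order all_algebra.
From mathcomp Require Import ring lra.
Import Order.TTheory GRing.Theory Num.Theory.
Local Open Scope ring_scope.

(* Put p = n/(m+1).  The conditions d = m b and a (b + d) = r n say b = r p / a, so
   multiplying the two law-of-cosines relations by a^2 turns an envelope into a point
   (a, u, w) = (a, a c, a e), a != 0, on the curves u^2 = a^4 - 2 p s a^2 + r^2 p^2 and
   w^2 = a^4 + 2 m p s a^2 + m^2 r^2 p^2; conversely the signs of a, u, w are free and
   c, e > 0 holds automatically because |cos theta| < 1.  The first curve is birational
   to E via x = 2 u + 2 a^2 - 2 p s, y = 2 a x, with inverse a = y / 2x (so y != 0 iff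
   a != 0), and under this map the second equation becomes z^2 = G(x) with z = 4 x w. *)

Section CurveIdentities.
Context {F : comPzRingType}.
Variables (R S m p : F).

Definition cubicE (x : F) := x * (x + 2 * p * (R + S)) * (x - 2 * p * (R - S)).

Definition quarticG (x : F) :=
  x ^+ 4 + 8 * p * (m + 1) * S * x ^+ 3
  + 8 * p ^+ 2 * (2 * m ^+ 2 * R ^+ 2 + 4 * S ^+ 2 * m + 3 * S ^+ 2 - R ^+ 2) * x ^+ 2
  - 32 * p ^+ 3 * (m + 1) * S * (R ^+ 2 - S ^+ 2) * x
  + 16 * p ^+ 4 * (R ^+ 2 - S ^+ 2) ^+ 2.

Definition quartic_c (a : F) := a ^+ 4 - 2 * p * S * a ^+ 2 + R ^+ 2 * p ^+ 2.

Definition quartic_e (a : F) := a ^+ 4 + 2 * m * p * S * a ^+ 2 + m ^+ 2 * R ^+ 2 * p ^+ 2.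

Definition slope_quadratic (x v : F) :=
  x ^+ 2 + 4 * (p * S - v ^+ 2) * x - 4 * p ^+ 2 * (R ^+ 2 - S ^+ 2).

Lemma cubicE_sub_sqr x v : cubicE x - (2 * v * x) ^+ 2 = x * slope_quadratic x v.
Proof. by rewrite /cubicE /slope_quadratic; ring. Qed.

Lemma slope_quadraticE x v :
  slope_quadratic x v = (x - 2 * v ^+ 2 + 2 * p * S) ^+ 2 - 4 * quartic_c v.
Proof. by rewrite /slope_quadratic /quartic_c; ring. Qed.

Lemma quarticG_sub_sqr x v :
  quarticG x - (4 * x) ^+ 2 * quartic_e v
  = slope_quadratic x v * (slope_quadratic x v + 8 * (v ^+ 2 + m * p * S) * x).
Proof. by rewrite /quarticG /quartic_e /slope_quadratic; ring. Qed.

End CurveIdentities.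

Section CurvePoints.
Context {F : numFieldType}.
Variables (R S m p : F).
Hypotheses (p_neq0 : p != 0) (RS_neq : R ^+ 2 != S ^+ 2).

Lemma slope_quadratic_root_neq0 x v : slope_quadratic R S p x v = 0 -> x != 0.
Proof.
move=> q0; apply: contra_eqN q0 => /eqP ->.
have -> : slope_quadratic R S p 0 v = - 4 * p ^+ 2 * (R ^+ 2 - S ^+ 2).
  by rewrite /slope_quadratic; ring.
by rewrite !mulf_neq0 ?oppr_eq0 ?pnatr_eq0 ?expf_neq0 ?subr_eq0.
Qed.

Lemma quartic_pair_iff_curve_point :
  (exists a u w : F,
     [/\ a != 0, u ^+ 2 = quartic_c R S p a & w ^+ 2 = quartic_e R S m p a]) <->
  (exists x y z : F,
     [/\ y != 0, y ^+ 2 = cubicE R S p x & z ^+ 2 = quarticG R S m p x]).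
Proof.
split=> [[a [u [w [a_neq0 hu hw]]]] | [x [y [z [y_neq0 hy hz]]]]].
- pose x := 2 * u + 2 * a ^+ 2 - 2 * p * S.
  have q0 : slope_quadratic R S p x a = 0.
    by rewrite slope_quadraticE -hu /x; ring.
  have x_neq0 := slope_quadratic_root_neq0 x a q0.
  exists x, (2 * a * x), (4 * x * w); split.
  + by rewrite !mulf_neq0 ?pnatr_eq0.
  + by apply/esym/eqP; rewrite -subr_eq0 cubicE_sub_sqr q0 mulr0.
  + by apply/esym/eqP; rewrite -subr_eq0 exprMn hw quarticG_sub_sqr q0 mul0r.
- have x_neq0 : x != 0.
    by apply: contra_neq y_neq0 => x0; apply/eqP; rewrite -sqrf_eq0 hy x0 /cubicE !mul0r.
  pose a := y / (2 * x).
  have y_def : y = 2 * a * x by rewrite /a; field.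
  have q0 : slope_quadratic R S p x a = 0.
    apply/eqP; move: (cubicE_sub_sqr R S p x a).
    by rewrite -y_def hy subrr => /esym/eqP; rewrite mulf_eq0 (negbTE x_neq0).
  exists a, ((x - 2 * a ^+ 2 + 2 * p * S) / 2), (z / (4 * x)); split.
  + by apply: contra_neq y_neq0 => a0; rewrite y_def a0 mulr0 mul0r.
  + move/eqP: (slope_quadraticE R S p x a); rewrite q0 eq_sym subr_eq0 => /eqP h.
    by rewrite expr_div_n h; field.
  + move/eqP: (quarticG_sub_sqr R S m p x a); rewrite q0 mul0r subr_eq0 -hz => /eqP h.
    by rewrite expr_div_n h; field.
Qed.

End CurvePoints.

Lemma cosine_law_gt0 {F : realDomainType} (t a b : F) :
  -1 < t -> t < 1 -> 0 < a -> 0 < b -> 0 < a ^+ 2 + b ^+ 2 - 2 * t * a * b.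
Proof.
move=> t_gtN1 t_lt1 a_gt0 b_gt0.
have ab_gt0 := mulr_gt0 a_gt0 b_gt0.
have : 0 < (1 - t) * (a * b) by rewrite mulr_gt0 // subr_gt0.
by have := sqr_ge0 (a - b); nra.
Qed.

Lemma quartic_c_normr {F : realDomainType} (R S p a : F) :
  quartic_c R S p `|a| = quartic_c R S p a.
Proof. by rewrite /quartic_c -[4%N]/(2 * 2)%N !exprM real_normK ?num_real. Qed.

Lemma quartic_e_normr {F : realDomainType} (R S m p a : F) :
  quartic_e R S m p `|a| = quartic_e R S m p a.
Proof. by rewrite /quartic_e -[4%N]/(2 * 2)%N !exprM real_normK ?num_real. Qed.

Section LawOfCosines.
Context {F : fieldType}.
Variables (R S m p : F).
Hypothesis R_neq0 : R != 0.

Lemma sides_quartic_c a : a != 0 ->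
  a ^+ 2 * (a ^+ 2 + (R * p / a) ^+ 2 - 2 * (S / R) * a * (R * p / a)) = quartic_c R S p a.
Proof. by move=> a_neq0; rewrite /quartic_c; field; apply/andP. Qed.

Lemma sides_quartic_e a : a != 0 ->
  a ^+ 2 * (a ^+ 2 + (m * (R * p / a)) ^+ 2 + 2 * (S / R) * a * (m * (R * p / a)))
  = quartic_e R S m p a.
Proof. by move=> a_neq0; rewrite /quartic_e; field; apply/andP. Qed.

End LawOfCosines.

Section Envelope.
Context {F : realFieldType}.
Variables (R S m N : F).
Hypotheses (R_gt0 : 0 < R) (S_gtNR : - R < S) (S_ltR : S < R) (m_gt0 : 0 < m) (N_gt0 : 0 < N).

Local Notation p := (N / (m + 1)).

Definition envelope (a b c d e : F) : Prop :=
  [/\ 0 < a, 0 < b, 0 < c, 0 < d & 0 < e] /\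
  [/\ a ^+ 2 + b ^+ 2 - 2 * (S / R) * a * b = c ^+ 2,
      a ^+ 2 + d ^+ 2 + 2 * (S / R) * a * d = e ^+ 2,
      a * (b + d) = R * N
    & d = m * b].

Definition curve_point (x y z : F) : Prop :=
  [/\ y != 0,
      y ^+ 2 = x * (x + 2 * N * (R + S) / (m + 1)) * (x - 2 * N * (R - S) / (m + 1))
    & z ^+ 2 = x ^+ 4
               + 8 * N * S * x ^+ 3
               + 8 * N ^+ 2
                   * (2 * m ^+ 2 * R ^+ 2 + 4 * S ^+ 2 * m + 3 * S ^+ 2 - R ^+ 2)
                   / (m + 1) ^+ 2 * x ^+ 2
               - 32 * N ^+ 3 * S * (R ^+ 2 - S ^+ 2) / (m + 1) ^+ 2 * x
               + 16 * N ^+ 4 * (R ^+ 2 - S ^+ 2) ^+ 2 / (m + 1) ^+ 4].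

Let R_neq0 : R != 0. Proof. exact: lt0r_neq0. Qed.
Let m1_gt0 : 0 < m + 1. Proof. exact: addr_gt0 m_gt0 ltr01. Qed.
Let m1_neq0 : m + 1 != 0. Proof. exact: lt0r_neq0. Qed.
Let p_gt0 : 0 < p. Proof. exact: divr_gt0. Qed.

Lemma curve_pointE x y z :
  curve_point x y z = [/\ y != 0, y ^+ 2 = cubicE R S p x & z ^+ 2 = quarticG R S m p x].
Proof.
rewrite /curve_point /cubicE /quarticG.
by congr and3; congr (_ = _); field.
Qed.

Lemma envelope_iff_quartic_pair :
  (exists a b c d e, envelope a b c d e) <->
  (exists a u w : F,
     [/\ a != 0, u ^+ 2 = quartic_c R S p a & w ^+ 2 = quartic_e R S m p a]).
Proof.
have cos_gtN1 : -1 < S / R by rewrite ltr_pdivlMr // mulN1r.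
have cos_lt1 : S / R < 1 by rewrite ltr_pdivrMr // mul1r.
split=> [[a [b [c [d [e [[a_gt0 _ _ _ _] [hc he hN hd]]]]]]] | [a [u [w [a_neq0 hu hw]]]]].
- have a_neq0 := lt0r_neq0 a_gt0.
  have b_def : b = R * p / a.
    have RN : R * N = a * b * (m + 1) by rewrite -hN hd; ring.
    by rewrite mulrA RN; field; apply/andP.
  exists a, (a * c), (a * e); split => //.
  + by rewrite exprMn -hc b_def sides_quartic_c.
  + by rewrite exprMn -he hd b_def sides_quartic_e.
- pose a' := `|a|; pose b := R * p / a'.
  have a'_gt0 : 0 < a' by rewrite normr_gt0.
  have a'_neq0 := lt0r_neq0 a'_gt0.
  have b_gt0 : 0 < b by rewrite divr_gt0 // mulr_gt0.
  have sqr_norm_div v : (`|v| / a') ^+ 2 = v ^+ 2 / a' ^+ 2.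
    by rewrite expr_div_n real_normK ?num_real.
  have sqr_gt0 v : 0 < (`|v| / a') ^+ 2 -> 0 < `|v| / a'.
    move=> v2_gt0; rewrite lt0r divr_ge0 // ?ltW // andbT.
    by apply: contraTneq v2_gt0 => ->; rewrite expr0n ltxx.
  have hc : a' ^+ 2 + b ^+ 2 - 2 * (S / R) * a' * b = (`|u| / a') ^+ 2.
    apply: (mulfI (expf_neq0 2 a'_neq0)); rewrite sides_quartic_c //.
    by rewrite sqr_norm_div hu quartic_c_normr; field.
  have he : a' ^+ 2 + (m * b) ^+ 2 + 2 * (S / R) * a' * (m * b) = (`|w| / a') ^+ 2.
    apply: (mulfI (expf_neq0 2 a'_neq0)); rewrite sides_quartic_e //.
    by rewrite sqr_norm_div hw quartic_e_normr; field.
  exists a', b, (`|u| / a'), (m * b), (`|w| / a'); split; split => //.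
  + by apply: sqr_gt0; rewrite -hc cosine_law_gt0.
  + exact: mulr_gt0.
  + apply: sqr_gt0; rewrite -he.
    have := cosine_law_gt0 (- (S / R)) a' (m * b).
    rewrite !mulrN !mulNr opprK; apply=> //; last exact: mulr_gt0.
    - by rewrite ltrN2.
    - by rewrite ltrNl.
  + by rewrite /b; field; apply/andP.
Qed.

Lemma envelope_iff_curve_point :
  (exists a b c d e, envelope a b c d e) <-> (exists x y z, curve_point x y z).
Proof.
have p_neq0 := lt0r_neq0 p_gt0.
have RS_neq : R ^+ 2 != S ^+ 2 by rewrite gt_eqF //; move: S_gtNR S_ltR; nra.
apply: (iff_trans envelope_iff_quartic_pair).
apply: (iff_trans (quartic_pair_iff_curve_point R S m p p_neq0 RS_neq)).
by split=> -[x [y [z h]]]; exists x, y, z; rewrite curve_pointE in h *.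
Qed.

End Envelope.

Theorem theorem4p1 (r s : int) (m : rat) (n : nat) :
  0 <= `|s| -> `|s| < r -> gcdz r s = 1 -> 0 < m -> (0 < n)%N ->
  in_N_theta_m r s m n <->
  exists x y z : rat,
    [/\ y != 0,
        y ^+ 2 = x * (x + 2%:R * n%:R * (r + s)%:~R / (m + 1))
                   * (x - 2%:R * n%:R * (r - s)%:~R / (m + 1))
      & z ^+ 2 = x ^+ 4
                 + 8%:R * n%:R * s%:~R * x ^+ 3
                 + 8%:R * n%:R ^+ 2
                     * (2%:R * m ^+ 2 * r%:~R ^+ 2 + 4%:R * s%:~R ^+ 2 * m
                        + 3%:R * s%:~R ^+ 2 - r%:~R ^+ 2) / (m + 1) ^+ 2 * x ^+ 2
                 - 32%:R * n%:R ^+ 3 * s%:~R * (r%:~R ^+ 2 - s%:~R ^+ 2)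
                     / (m + 1) ^+ 2 * x
                 + 16%:R * n%:R ^+ 4 * (r%:~R ^+ 2 - s%:~R ^+ 2) ^+ 2
                     / (m + 1) ^+ 4].
Proof.
(* Coprimality of r and s only normalises the representation of cos theta = s/r. *)
move=> _ s_lt_r _ m_gt0 n_gt0.
have r_gt0 : 0 < r%:~R :> rat by rewrite ltr0z (le_lt_trans (normr_ge0 s)).
move: s_lt_r; rewrite ltr_norml => /andP[Nr_lt_s s_lt_r].
rewrite !intrD !intrN.
apply: envelope_iff_curve_point => //.
- by rewrite -intrN ltr_int.
- by rewrite ltr_int.
- by rewrite ltr0n.
Qed.
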